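(* Let $C\geq 1$ and $n\ge 2$. Let $x_1<\dots<x_n$, $y_1<\dots<y_n$, $p_1<\dots<p_n$ be real numbers, and write $\Delta x_i=x_{i+1}-x_i$, $\Delta y_i=y_{i+1}-y_i$, $\Delta p_i=p_{i+1}-p_i$ for $1\le i\le n-1$. Suppose that for all $1\le i\le n-1$, \[ C^{-1}\Delta x_i\le \Delta p_i\le C\Delta x_i \quad\text{and}\quad C^{-1}\Big(p_{i+1}-\tfrac{\Delta y_i}{\Delta x_i}\Big)\le \tfrac{\Delta y_i}{\Delta x_i}-p_i\le C\Big(p_{i+1}-\tfrac{\Delta y_i}{\Delta x_i}\Big). \] Then there is a constant $K\ge1$ depending only on $C$ such that: (a) There exists a strictly convex $C^1$ function $f$ on $[x_1,x_n]$ with $f(x_i)=y_i$ and $f'(x_i)=p_i$ for all $i$, such that $f'$ is piecewise linear and each linear piece of $f'$ has slope in $[K^{-1},K]$. (b) Letting $D$ be $\frac{\pi}{4}$ times the infimum of the slopes of the linear pieces of $f'$ for the function $f$ in (a), the function $f$ can be modified to a convex $C^2$ function $g$ on $[x_1,x_n]$ with $g(x_i)=y_i$, $g'(x_i)=p_i$ and $g''(x_i)=D$ for all $i$, and $K^{-1}\le g''(x)\le K$ for all $x\in(x_1,x_n)$. *)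

From Stdlib Require Import Reals.
Open Scope R_scope.

Definition has_deriv_within (a b : R) (f : R -> R) (x d : R) : Prop :=
  forall eps : R, 0 < eps -> exists delta : R, 0 < delta /\
    forall y : R, a <= y <= b -> y <> x -> Rabs (y - x) < delta ->
      Rabs ((f y - f x) / (y - x) - d) < eps.

Definition cont_on (a b : R) (f : R -> R) : Prop :=
  forall x : R, a <= x <= b ->
    forall eps : R, 0 < eps -> exists delta : R, 0 < delta /\
      forall y : R, a <= y <= b -> Rabs (y - x) < delta -> Rabs (f y - f x) < eps.

Definition C1_on (a b : R) (f f1 : R -> R) : Prop :=
  (forall x, a <= x <= b -> has_deriv_within a b f x (f1 x)) /\ cont_on a b f1.

Definition C2_on (a b : R) (f f1 f2 : R -> R) : Prop :=
  (forall x, a <= x <= b -> has_deriv_within a b f x (f1 x)) /\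
  (forall x, a <= x <= b -> has_deriv_within a b f1 x (f2 x)) /\
  cont_on a b f2.

Definition convex_on (a b : R) (f : R -> R) : Prop :=
  forall u v l : R, a <= u <= b -> a <= v <= b -> 0 <= l <= 1 ->
    f (l * u + (1 - l) * v) <= l * f u + (1 - l) * f v.

Definition strictly_convex_on (a b : R) (f : R -> R) : Prop :=
  forall u v l : R, a <= u <= b -> a <= v <= b -> u <> v -> 0 < l < 1 ->
    f (l * u + (1 - l) * v) < l * f u + (1 - l) * f v.

Fixpoint minl (s : nat -> R) (k : nat) : R :=
  match k with
  | O => s O
  | S k' => Rmin (minl s k') (s (S k'))
  end.

(* On [x_i, x_(i+1)], of width h, let a = Δy/h - p_i and b = p_(i+1) - Δy/h. The
   hypotheses say exactly that a, b > 0, h/C <= a + b <= C h and b/C <= a <= C b.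
   (a) f' has slope a(a+b)/(bh) up to x_i + hb/(a+b) and slope b(a+b)/(ah) after it:
   the only kinked line with f'(x_(i+1)) = p_(i+1) and mean value p_i + a = Δy/h.
   Both slopes lie in [C^-2, C^2].
   (b) g'' = D + (a hat function of half-width kap h), with kap = (1 - pi/4)/(C + 1).
   The height and centre of the hat are forced by g'(x_(i+1)) = p_(i+1) and
   g(x_(i+1)) = y_(i+1), and D <= (pi/4) (both slopes) is what keeps the hat inside
   the interval. Then C^-2/2 <= D <= g'' <= C^2 + C/kap.
   The pieces agree with their derivatives at the nodes, so the functions glued from
   them are C^1, resp. C^2. *)

From Stdlib Require Import Reals Lra Lia Factorial.
From Coquelicot Require Import Coquelicot.
Open Scope R_scope.

(** * Derivatives, continuity and convexity *)

Lemma has_deriv_within_of_derivable_pt_lim a b f z d :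
  derivable_pt_lim f z d -> has_deriv_within a b f z d.
Proof.
  intros H eps Heps; destruct (H eps Heps) as [del E].
  exists del; split; [apply cond_pos|]; intros y _ Hyz Hy.
  specialize (E (y - z) ltac:(lra) Hy); replace (z + (y - z)) with y in E by ring; exact E.
Qed.

Lemma cont_on_of_continuity_pt a b f : (forall z, continuity_pt f z) -> cont_on a b f.
Proof.
  intros H z _ eps Heps; destruct (H z eps Heps) as [del [Hdel E]].
  exists del; split; [exact Hdel|]; intros y _ Hy.
  destruct (Req_dec y z) as [->|Hne]; [unfold Rminus; rewrite Rplus_opp_r, Rabs_R0; exact Heps|].
  apply (E y); split; [split; [exact I|auto] | exact Hy].
Qed.

Lemma increasing_of_deriv_pos f f' :
  (forall z, derivable_pt_lim f z (f' z)) -> (forall z, 0 < f' z) ->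
  forall u w, u < w -> f u < f w.
Proof.
  intros Hd Hpos u w Huw.
  destruct (MVT_cor2 f f' u w Huw (fun c _ => Hd c)) as [c [E _]].
  pose proof (Hpos c); nra.
Qed.

Lemma strictly_convex_of_deriv_increasing a b f f' :
  (forall z, a <= z <= b -> derivable_pt_lim f z (f' z)) ->
  (forall u w, a <= u -> u < w -> w <= b -> f' u < f' w) ->
  strictly_convex_on a b f.
Proof.
  intros Hd Hinc.
  assert (Hkey : forall u v l, a <= u -> u < v -> v <= b -> 0 < l < 1 ->
            f (l * u + (1 - l) * v) < l * f u + (1 - l) * f v).
  { intros u v l Hu Huv Hv Hl; set (z := l * u + (1 - l) * v).
    assert (Hz : u < z < v) by (unfold z; split; nra).
    destruct (MVT_cor2 f f' u z ltac:(lra) (fun c Hc => Hd c ltac:(lra))) as [c1 [E1 Hc1]].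
    destruct (MVT_cor2 f f' z v ltac:(lra) (fun c Hc => Hd c ltac:(lra))) as [c2 [E2 Hc2]].
    assert (Hlt : f' c1 < f' c2) by (apply Hinc; lra).
    assert (z - u = (1 - l) * (v - u)) by (unfold z; ring).
    assert (v - z = l * (v - u)) by (unfold z; ring).
    assert (0 < l * (1 - l) * (v - u) * (f' c2 - f' c1))
      by (repeat apply Rmult_lt_0_compat; lra).
    nra. }
  intros u v l Hu Hv Huv Hl; destruct (Rlt_le_dec u v); [apply Hkey; lra|].
  replace (l * u + (1 - l) * v) with ((1 - l) * v + (1 - (1 - l)) * u) by ring.
  replace (l * f u + (1 - l) * f v) with ((1 - l) * f v + (1 - (1 - l)) * f u) by ring.
  apply Hkey; lra.
Qed.

Lemma convex_of_strictly_convex a b f : strictly_convex_on a b f -> convex_on a b f.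
Proof.
  intros H u v l Hu Hv Hl.
  destruct (Req_dec u v) as [->|Huv].
  { replace (l * v + (1 - l) * v) with v by ring; lra. }
  destruct (Req_dec l 0) as [->|H0].
  { replace (0 * u + (1 - 0) * v) with v by ring; lra. }
  destruct (Req_dec l 1) as [->|H1].
  { replace (1 * u + (1 - 1) * v) with u by ring; lra. }
  left; apply H; auto; lra.
Qed.

Lemma derivable_pt_lim_two_sided (f fl fr : R -> R) z d del :
  0 < del ->
  (forall y, z - del <= y <= z -> f y = fl y) ->
  (forall y, z <= y <= z + del -> f y = fr y) ->
  derivable_pt_lim fl z d -> derivable_pt_lim fr z d -> derivable_pt_lim f z d.
Proof.
  intros Hdel Hl Hr Dl Dr eps Heps.
  destruct (Dl eps Heps) as [dl El], (Dr eps Heps) as [dr Er].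
  assert (Hpos : 0 < Rmin del (Rmin dl dr))
    by (apply Rmin_pos; [lra | apply Rmin_pos; apply cond_pos]).
  exists (mkposreal _ Hpos); simpl; intros u Hu0 Hu.
  pose proof (Rmin_l del (Rmin dl dr)); pose proof (Rmin_r del (Rmin dl dr)).
  pose proof (Rmin_l dl dr); pose proof (Rmin_r dl dr).
  pose proof (Rle_abs u); pose proof (Rle_abs (- u)); rewrite Rabs_Ropp in *.
  destruct (Rle_lt_dec u 0).
  - rewrite (Hl (z + u)), (Hl z) by lra. apply El; auto; lra.
  - rewrite (Hr (z + u)), (Hr z) by lra. apply Er; auto; lra.
Qed.

Lemma continuity_pt_two_sided (f fl fr : R -> R) z del :
  0 < del ->
  (forall y, z - del <= y <= z -> f y = fl y) ->
  (forall y, z <= y <= z + del -> f y = fr y) ->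
  continuity_pt fl z -> continuity_pt fr z -> continuity_pt f z.
Proof.
  intros Hdel Hl Hr Cl Cr eps Heps.
  destruct (Cl eps Heps) as [dl [Hdl El]], (Cr eps Heps) as [dr [Hdr Er]].
  exists (Rmin del (Rmin dl dr)); split; [repeat apply Rmin_pos; auto|].
  intros u [Hu0 Hu]; simpl in *; unfold R_dist in *.
  pose proof (Rmin_l del (Rmin dl dr)); pose proof (Rmin_r del (Rmin dl dr)).
  pose proof (Rmin_l dl dr); pose proof (Rmin_r dl dr).
  pose proof (Rle_abs (u - z)); pose proof (Rle_abs (- (u - z))); rewrite Rabs_Ropp in *.
  destruct (Rle_lt_dec u z).
  - rewrite (Hl u), (Hl z) by lra. apply El; split; auto; lra.
  - rewrite (Hr u), (Hr z) by lra. apply Er; split; auto; lra.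
Qed.

(** * Splicing and gluing *)

Definition splice (a : R) (f g : R -> R) (z : R) : R := if Rle_dec z a then f z else g z.

Lemma splice_left a f g z : z <= a -> splice a f g z = f z.
Proof. unfold splice; destruct Rle_dec; lra. Qed.

Lemma splice_right a f g z : a < z -> splice a f g z = g z.
Proof. unfold splice; destruct Rle_dec; lra. Qed.

Section Splice.
Variables (a : R) (f g : R -> R).
Hypothesis f_eq_g : f a = g a.

Lemma splice_right_closed z : a <= z -> splice a f g z = g z.
Proof.
  intros Hz; destruct (Req_dec z a) as [->|]; [rewrite splice_left|rewrite splice_right]; lra.
Qed.

Lemma splice_two_sided z : exists del, 0 < del /\
  (forall y, z - del <= y <= z -> splice a f g y = (if Rle_dec z a then f else g) y) /\
  (forall y, z <= y <= z + del -> splice a f g y = (if Rlt_dec z a then f else g) y).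
Proof.
  destruct (Rle_dec z a), (Rlt_dec z a); try lra.
  - exists (a - z); repeat split; [lra| |]; intros; apply splice_left; lra.
  - exists 1; repeat split; [lra| |]; intros.
    + apply splice_left; lra.
    + apply splice_right_closed; lra.
  - exists (z - a); repeat split; [lra| |]; intros; apply splice_right_closed; lra.
Qed.

Lemma derivable_pt_lim_splice (f' g' : R -> R) :
  (forall z, derivable_pt_lim f z (f' z)) -> (forall z, derivable_pt_lim g z (g' z)) ->
  f' a = g' a -> forall z, derivable_pt_lim (splice a f g) z (splice a f' g' z).
Proof.
  intros Df Dg Ha z.
  destruct (splice_two_sided z) as [del [Hdel [Hl Hr]]].
  apply (derivable_pt_lim_two_sided _ _ _ z _ del Hdel Hl Hr); unfold splice;
    destruct (Rle_dec z a), (Rlt_dec z a); try lra; auto.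
  replace z with a by lra; rewrite Ha; auto.
Qed.

Lemma continuity_pt_splice :
  (forall z, continuity_pt f z) -> (forall z, continuity_pt g z) ->
  forall z, continuity_pt (splice a f g) z.
Proof.
  intros Cf Cg z.
  destruct (splice_two_sided z) as [del [Hdel [Hl Hr]]].
  apply (continuity_pt_two_sided _ _ _ z del Hdel Hl Hr);
    destruct (Rle_dec z a), (Rlt_dec z a); auto.
Qed.

Lemma splice_increasing :
  (forall u v, u < v -> f u < f v) -> (forall u v, u < v -> g u < g v) ->
  forall u v, u < v -> splice a f g u < splice a f g v.
Proof.
  intros If Ig u v Huv; unfold splice.
  destruct (Rle_dec u a), (Rle_dec v a); auto; try lra.
  destruct (Req_dec u a) as [->|]; [rewrite f_eq_g; auto|].
  apply Rlt_trans with (f a); [apply If; lra|rewrite f_eq_g; apply Ig; lra].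
Qed.

End Splice.

(* The first and last pieces are used on unbounded intervals, so glued functions
   are defined, and differentiable, on all of R. *)
Fixpoint glue (x : nat -> R) (F : nat -> R -> R) (k i : nat) : R -> R :=
  match k with
  | O => F i
  | S k' => splice (x (i + 1)%nat) (F i) (glue x F k' (i + 1))
  end.

Section Glue.
Variable x : nat -> R.

Definition nodes_increasing (N : nat) : Prop :=
  forall j, (j < N)%nat -> x j < x (j + 1)%nat.

Definition interpolates (F : nat -> R -> R) (v : nat -> R) (N : nat) : Prop :=
  forall j, (j < N)%nat -> F j (x j) = v j /\ F j (x (j + 1)%nat) = v (j + 1)%nat.

Lemma nodes_lt N a b : nodes_increasing N -> (a < b <= N)%nat -> x a < x b.
Proof.
  intros Hx Hab; induction b as [|b IH]; [lia|].
  replace (S b) with (b + 1)%nat by lia.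
  destruct (Nat.eq_dec a b) as [->|]; [apply Hx; lia|].
  apply Rlt_trans with (x b); [apply IH|apply Hx]; lia.
Qed.

Lemma glue_piece F k i z : exists j, (i <= j <= i + k)%nat /\ glue x F k i z = F j z.
Proof.
  revert i; induction k as [|k IH]; intros i; simpl.
  - exists i; split; [lia|reflexivity].
  - unfold splice; destruct Rle_dec.
    + exists i; split; [lia|reflexivity].
    + destruct (IH (i + 1)%nat) as [j [Hj E]]; exists j; split; [lia|exact E].
Qed.

Lemma glue_on_piece F v k i j z :
  nodes_increasing (i + k + 1) -> interpolates F v (i + k + 1) ->
  (i <= j <= i + k)%nat -> x j <= z <= x (j + 1)%nat -> glue x F k i z = F j z.
Proof.
  revert i; induction k as [|k IH]; intros i Hx HF Hj Hz; simpl.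
  - f_equal; lia.
  - destruct (Nat.eq_dec j i) as [->|Hji]; [apply splice_left; lra|].
    destruct (Rle_lt_dec z (x (i + 1)%nat)) as [Hz'|Hz'].
    + rewrite splice_left by lra.
      assert (j = i + 1)%nat.
      { destruct (Nat.eq_dec j (i + 1)) as [|Hne]; [auto|].
        pose proof (nodes_lt _ (i + 1) j Hx ltac:(lia)); lra. }
      subst j; replace z with (x (i + 1)%nat) by lra.
      destruct (HF i ltac:(lia)) as [_ ->]; symmetry; apply HF; lia.
    + rewrite splice_right by lra.
      apply IH; [intros l Hl; apply Hx; lia | intros l Hl; apply HF; lia | lia | exact Hz].
Qed.

Lemma glue_interpolates F v k i l :
  nodes_increasing (i + k + 1) -> interpolates F v (i + k + 1) ->
  (i <= l <= i + k + 1)%nat -> glue x F k i (x l) = v l.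
Proof.
  intros Hx HF Hl; destruct (Nat.eq_dec l (i + k + 1)) as [->|Hne].
  - rewrite (glue_on_piece F v k i (i + k)%nat); auto; [apply (HF (i + k)%nat); lia|lia|].
    split; [left; apply Hx; lia|right; reflexivity].
  - rewrite (glue_on_piece F v k i l); auto; [apply (HF l); lia|lia|].
    split; [right; reflexivity|left; apply Hx; lia].
Qed.

Lemma glue_splice_agree F v k i :
  nodes_increasing (i + S k + 1) -> interpolates F v (i + S k + 1) ->
  F i (x (i + 1)%nat) = glue x F k (i + 1) (x (i + 1)%nat).
Proof.
  intros Hx HF; rewrite (glue_interpolates F v); try lia.
  - apply HF; lia.
  - intros j Hj; apply Hx; lia.
  - intros j Hj; apply HF; lia.
Qed.

Lemma derivable_pt_lim_glue F F' v v' k i :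
  nodes_increasing (i + k + 1) -> interpolates F v (i + k + 1) ->
  interpolates F' v' (i + k + 1) ->
  (forall j z, (j <= i + k)%nat -> derivable_pt_lim (F j) z (F' j z)) ->
  forall z, derivable_pt_lim (glue x F k i) z (glue x F' k i z).
Proof.
  revert i; induction k as [|k IH]; intros i Hx HF HF' HD z; simpl.
  - apply HD; lia.
  - apply derivable_pt_lim_splice.
    + apply (glue_splice_agree F v); auto.
    + intros; apply HD; lia.
    + apply IH; [intros j Hj; apply Hx | intros j Hj; apply HF | intros j Hj; apply HF'
                |intros j u Hj; apply HD]; lia.
    + apply (glue_splice_agree F' v'); auto.
Qed.

Lemma continuity_pt_glue F v k i :
  nodes_increasing (i + k + 1) -> interpolates F v (i + k + 1) ->
  (forall j z, (j <= i + k)%nat -> continuity_pt (F j) z) ->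
  forall z, continuity_pt (glue x F k i) z.
Proof.
  revert i; induction k as [|k IH]; intros i Hx HF HC z; simpl.
  - apply HC; lia.
  - apply continuity_pt_splice.
    + apply (glue_splice_agree F v); auto.
    + intros; apply HC; lia.
    + apply IH; [intros j Hj; apply Hx | intros j Hj; apply HF | intros j u Hj; apply HC]; lia.
Qed.

Lemma glue_increasing F v k i :
  nodes_increasing (i + k + 1) -> interpolates F v (i + k + 1) ->
  (forall j u w, (j <= i + k)%nat -> u < w -> F j u < F j w) ->
  forall u w, u < w -> glue x F k i u < glue x F k i w.
Proof.
  revert i; induction k as [|k IH]; intros i Hx HF HI; simpl.
  - intros u w; apply HI; lia.
  - apply splice_increasing.
    + apply (glue_splice_agree F v); auto.
    + intros u w; apply HI; lia.
    + apply IH; [intros j Hj; apply Hx | intros j Hj; apply HF | intros j u w Hj; apply HI]; lia.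
Qed.

End Glue.

(** * Truncated powers *)

Definition ramp (t z : R) : R := Rmax (z - t) 0.

Definition tpow (k : nat) (t z : R) : R := ramp t z ^ k / INR (fact k).

Lemma ramp_left t z : z <= t -> ramp t z = 0.
Proof. intros; apply Rmax_right; lra. Qed.

Lemma ramp_right t z : t <= z -> ramp t z = z - t.
Proof. intros; apply Rmax_left; lra. Qed.

Lemma ramp_increment_bounds t u w : u <= w -> 0 <= ramp t w - ramp t u <= w - u.
Proof. intros; unfold ramp, Rmax; repeat destruct Rle_dec; lra. Qed.

Lemma tpow_left k t z : z <= t -> tpow (S k) t z = 0.
Proof. intros; unfold tpow, Rdiv; rewrite ramp_left, pow_i by (lra || lia); apply Rmult_0_l. Qed.

Lemma tpow_right k t z : t <= z -> tpow k t z = (z - t) ^ k / INR (fact k).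
Proof. intros; unfold tpow; rewrite ramp_right by lra; reflexivity. Qed.

Lemma tpow_splice k t z :
  tpow (S k) t z = splice t (fun _ => 0) (fun y => (y - t) ^ S k / INR (fact (S k))) z.
Proof.
  unfold splice; destruct Rle_dec; [apply tpow_left | apply tpow_right]; lra.
Qed.

Lemma derivable_pt_lim_monomial n t y :
  derivable_pt_lim (fun z => (z - t) ^ S n / INR (fact (S n))) y ((y - t) ^ n / INR (fact n)).
Proof.
  apply is_derive_Reals.
  apply (is_derive_ext (fun z => / INR (fact (S n)) * (z - t) ^ S n));
    [intros; apply Rmult_comm|].
  replace ((y - t) ^ n / INR (fact n)) with (/ INR (fact (S n)) * (INR (S n) * 1 * (y - t) ^ n)).
  - apply is_derive_scal, (is_derive_pow (fun z => z - t)); auto_derive; [auto|ring].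
  - rewrite fact_simpl, mult_INR, S_INR.
    pose proof (INR_fact_neq_0 n); pose proof (pos_INR n); field; lra.
Qed.

Lemma monomial_vanishes_at_base n t : 0 = (t - t) ^ S n / INR (fact (S n)).
Proof. unfold Rdiv; rewrite Rminus_diag, pow_i by lia; ring. Qed.

Lemma derivable_pt_lim_tpow k t z :
  derivable_pt_lim (tpow (S (S k)) t) z (tpow (S k) t z).
Proof.
  apply (derivable_pt_lim_ext
           (splice t (fun _ => 0) (fun y => (y - t) ^ S (S k) / INR (fact (S (S k))))));
    [intros; symmetry; apply tpow_splice|].
  rewrite tpow_splice.
  apply derivable_pt_lim_splice;
    [apply monomial_vanishes_at_base | | | apply monomial_vanishes_at_base].
  - intros; apply derivable_pt_lim_const.
  - intros; apply derivable_pt_lim_monomial.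
Qed.

Lemma continuity_pt_tpow k t z : continuity_pt (tpow (S k) t) z.
Proof.
  apply (continuity_pt_ext (splice t (fun _ => 0) (fun y => (y - t) ^ S k / INR (fact (S k)))));
    [intros; symmetry; apply tpow_splice|].
  apply continuity_pt_splice; [apply monomial_vanishes_at_base| |]; intros y.
  - apply continuity_pt_const; intros ? ?; reflexivity.
  - apply derivable_continuous_pt; eexists; apply derivable_pt_lim_monomial.
Qed.

Lemma tpow_1 t z : tpow 1 t z = ramp t z.
Proof. unfold tpow; simpl; field. Qed.

(* [tent 1 c w] is the hat function on [c - w, c + w] with peak w at c;
   [tent 2] and [tent 3] are its successive antiderivatives. *)
Definition tent (k : nat) (c w z : R) : R := tpow k (c - w) z - 2 * tpow k c z + tpow k (c + w) z.

Lemma derivable_pt_lim_tent k c w z :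
  derivable_pt_lim (tent (S (S k)) c w) z (tent (S k) c w z).
Proof.
  unfold tent.
  apply (derivable_pt_lim_plus (fun y => tpow _ (c - w) y - 2 * tpow _ c y)).
  - apply (derivable_pt_lim_minus (tpow _ (c - w)) (fun y => 2 * tpow _ c y)).
    + apply derivable_pt_lim_tpow.
    + apply (derivable_pt_lim_scal (tpow _ c)), derivable_pt_lim_tpow.
  - apply derivable_pt_lim_tpow.
Qed.

Lemma continuity_pt_tent k c w z : continuity_pt (tent (S k) c w) z.
Proof.
  apply continuity_pt_plus; [apply continuity_pt_minus; [|apply continuity_pt_scal]|];
    apply continuity_pt_tpow.
Qed.

Lemma tent_left k c w z : 0 <= w -> z <= c - w -> tent (S k) c w z = 0.
Proof. intros; unfold tent; rewrite !tpow_left by lra; ring. Qed.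

Lemma tent_right c w z : 0 <= w -> c + w <= z ->
  tent 1 c w z = 0 /\ tent 2 c w z = w ^ 2 /\ tent 3 c w z = (z - c) * w ^ 2.
Proof. intros; unfold tent; rewrite !tpow_right by lra; simpl; repeat split; field. Qed.

Lemma tent_1_bounds c w z : 0 <= w -> 0 <= tent 1 c w z <= w.
Proof. intros; unfold tent; rewrite !tpow_1; unfold ramp, Rmax; repeat destruct Rle_dec; lra. Qed.

(** * The pieces on one interval *)

Definition kink (h a b : R) : R := h * b / (a + b).
Definition slope_l (h a b : R) : R := a * (a + b) / (b * h).
Definition slope_r (h a b : R) : R := b * (a + b) / (a * h).

Definition qpiece (x0 y0 p0 h a b z : R) : R :=
  y0 + p0 * (z - x0) + slope_l h a b * (z - x0) ^ 2 / 2
  + (slope_r h a b - slope_l h a b) * tpow 2 (x0 + kink h a b) z.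

Definition qpiece' (x0 p0 h a b z : R) : R :=
  p0 + slope_l h a b * (z - x0) + (slope_r h a b - slope_l h a b) * tpow 1 (x0 + kink h a b) z.

Lemma derivable_pt_lim_qpiece x0 y0 p0 h a b z :
  derivable_pt_lim (qpiece x0 y0 p0 h a b) z (qpiece' x0 p0 h a b z).
Proof.
  apply is_derive_Reals; unfold qpiece, qpiece'.
  set (t := x0 + kink h a b); set (al := slope_l h a b); set (de := slope_r h a b - al).
  apply (is_derive_plus (fun z => y0 + p0 * (z - x0) + al * (z - x0) ^ 2 / 2)
                        (fun z => de * tpow 2 t z)).
  - auto_derive; [auto|field].
  - apply (is_derive_scal (tpow 2 t)), is_derive_Reals, derivable_pt_lim_tpow.
Qed.

Lemma continuity_pt_qpiece' x0 p0 h a b z : continuity_pt (qpiece' x0 p0 h a b) z.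
Proof.
  unfold qpiece'.
  apply (continuity_pt_plus (fun z => p0 + slope_l h a b * (z - x0))
                            (fun z => (slope_r h a b - slope_l h a b) * tpow 1 _ z)).
  - apply derivable_continuous_pt; exists (slope_l h a b).
    apply is_derive_Reals; auto_derive; [auto|ring].
  - apply (continuity_pt_scal (tpow 1 _)), continuity_pt_tpow.
Qed.

Section QuadraticPiece.
Variables (x0 y0 p0 h a b : R).
Hypotheses (h_pos : 0 < h) (a_pos : 0 < a) (b_pos : 0 < b).

Lemma kink_bounds : 0 < kink h a b < h.
Proof.
  unfold kink; split; [apply Rdiv_lt_0_compat; nra|].
  apply Rmult_lt_reg_r with (a + b); [lra|].
  unfold Rdiv; rewrite Rmult_assoc, Rinv_l by lra; nra.
Qed.

Lemma qpiece_left : qpiece x0 y0 p0 h a b x0 = y0 /\ qpiece' x0 p0 h a b x0 = p0.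
Proof.
  pose proof kink_bounds; unfold qpiece, qpiece'.
  rewrite !tpow_left by lra; split; field.
Qed.

Lemma qpiece_right :
  qpiece x0 y0 p0 h a b (x0 + h) = y0 + (p0 + a) * h /\
  qpiece' x0 p0 h a b (x0 + h) = p0 + a + b.
Proof.
  pose proof kink_bounds; unfold qpiece, qpiece'.
  rewrite !tpow_right by lra; unfold kink, slope_l, slope_r; simpl; split; field; lra.
Qed.

Lemma qpiece'_left_linear z : z <= x0 + kink h a b ->
  qpiece' x0 p0 h a b z = qpiece' x0 p0 h a b x0 + slope_l h a b * (z - x0).
Proof.
  pose proof kink_bounds; intros; unfold qpiece'.
  rewrite !tpow_left by lra; ring.
Qed.

Lemma qpiece'_right_linear z : x0 + kink h a b <= z ->
  qpiece' x0 p0 h a b z =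
  qpiece' x0 p0 h a b (x0 + kink h a b) + slope_r h a b * (z - (x0 + kink h a b)).
Proof. intros; unfold qpiece'; rewrite !tpow_1, !ramp_right by lra; ring. Qed.

Lemma qpiece'_increasing u w : u < w -> qpiece' x0 p0 h a b u < qpiece' x0 p0 h a b w.
Proof.
  intros Huw; unfold qpiece'; rewrite !tpow_1.
  assert (0 < slope_l h a b) by (unfold slope_l; apply Rdiv_lt_0_compat; nra).
  assert (0 < slope_r h a b) by (unfold slope_r; apply Rdiv_lt_0_compat; nra).
  pose proof (ramp_increment_bounds (x0 + kink h a b) u w ltac:(lra)) as [Hd1 Hd2].
  set (d := ramp (x0 + kink h a b) w - ramp (x0 + kink h a b) u) in *.
  assert (0 <= slope_l h a b * (w - u - d)) by (apply Rmult_le_pos; lra).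
  assert (0 <= slope_r h a b * d) by (apply Rmult_le_pos; lra).
  destruct (Req_dec d 0) as [Hd0|Hd0].
  - assert (0 < slope_l h a b * (w - u - d)) by (apply Rmult_lt_0_compat; lra).
    unfold d in *; lra.
  - assert (0 < slope_r h a b * d) by (apply Rmult_lt_0_compat; lra).
    unfold d in *; lra.
Qed.

Lemma slopes_bounds C : 1 <= C ->
  / C * h <= a + b <= C * h -> / C * b <= a <= C * b ->
  / (C * C) <= slope_l h a b <= C * C /\ / (C * C) <= slope_r h a b <= C * C.
Proof.
  intros HC [Hs1 Hs2] [Hr1 Hr2].
  assert (HiC : 0 < / C) by (apply Rinv_0_lt_compat; lra).
  assert (HC' : C * / C = 1) by (apply Rinv_r; lra).
  assert (Hratio : forall u v, 0 < v -> / C * v <= u <= C * v -> / C <= u / v <= C).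
  { intros u v Hv [H1 H2]; split; apply Rmult_le_reg_r with v; auto;
      unfold Rdiv; rewrite Rmult_assoc, Rinv_l; lra. }
  assert (Hprod : forall u v, / C <= u <= C -> / C <= v <= C -> / (C * C) <= u * v <= C * C).
  { intros u v Hu Hv; rewrite Rinv_mult; split; apply Rmult_le_compat; lra. }
  assert (Hab : / C <= a / b <= C) by (apply Hratio; lra).
  assert (Hba : / C <= b / a <= C) by (apply Hratio; nra).
  assert (Hsum : / C <= (a + b) / h <= C) by (apply Hratio; lra).
  split.
  - replace (slope_l h a b) with (a / b * ((a + b) / h)) by (unfold slope_l; field; lra).
    apply Hprod; auto.
  - replace (slope_r h a b) with (b / a * ((a + b) / h)) by (unfold slope_r; field; lra).
    apply Hprod; auto.
Qed.

End QuadraticPiece.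

Definition excess (h a b D : R) : R := a + b - D * h.

(* Beyond the hat, tent 2 = w^2 and tent 3 = w^2 (z - c): the height makes g' gain
   [excess] over D h, and the centre makes g gain (a - D h / 2) h over y0 + p0 h + D h^2/2. *)
Definition bump_center (x0 h a b D : R) : R :=
  x0 + h - (a * h - D * h ^ 2 / 2) / excess h a b D.

Definition bump_height (h a b D kap : R) : R := excess h a b D / (kap * h) ^ 2.

Definition cpiece (x0 y0 p0 h a b D kap z : R) : R :=
  y0 + p0 * (z - x0) + D * (z - x0) ^ 2 / 2
  + bump_height h a b D kap * tent 3 (bump_center x0 h a b D) (kap * h) z.

Definition cpiece' (x0 p0 h a b D kap z : R) : R :=
  p0 + D * (z - x0) + bump_height h a b D kap * tent 2 (bump_center x0 h a b D) (kap * h) z.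

Definition cpiece'' (x0 h a b D kap z : R) : R :=
  D + bump_height h a b D kap * tent 1 (bump_center x0 h a b D) (kap * h) z.

Lemma derivable_pt_lim_cpiece x0 y0 p0 h a b D kap z :
  derivable_pt_lim (cpiece x0 y0 p0 h a b D kap) z (cpiece' x0 p0 h a b D kap z).
Proof.
  apply is_derive_Reals; unfold cpiece, cpiece'.
  apply (is_derive_plus (fun z => y0 + p0 * (z - x0) + D * (z - x0) ^ 2 / 2)
                        (fun z => bump_height h a b D kap * tent 3 _ _ z)).
  - auto_derive; [auto|field].
  - apply (is_derive_scal (tent 3 _ _)), is_derive_Reals, derivable_pt_lim_tent.
Qed.

Lemma derivable_pt_lim_cpiece' x0 p0 h a b D kap z :
  derivable_pt_lim (cpiece' x0 p0 h a b D kap) z (cpiece'' x0 h a b D kap z).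
Proof.
  apply is_derive_Reals; unfold cpiece', cpiece''.
  apply (is_derive_plus (fun z => p0 + D * (z - x0))
                        (fun z => bump_height h a b D kap * tent 2 _ _ z)).
  - auto_derive; [auto|ring].
  - apply (is_derive_scal (tent 2 _ _)), is_derive_Reals, derivable_pt_lim_tent.
Qed.

Lemma continuity_pt_cpiece'' x0 h a b D kap z : continuity_pt (cpiece'' x0 h a b D kap) z.
Proof.
  unfold cpiece''.
  apply (continuity_pt_plus (fun _ => D) (fun z => bump_height h a b D kap * tent 1 _ _ z)).
  - apply continuity_pt_const; intros ? ?; reflexivity.
  - apply (continuity_pt_scal (tent 1 _ _)), continuity_pt_tent.
Qed.

Section CubicPiece.
Variables (x0 y0 p0 h a b D kap : R).
Hypotheses (h_pos : 0 < h) (kap_pos : 0 < kap) (excess_pos : 0 < excess h a b D).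
Hypotheses (bump_after_x0 : x0 <= bump_center x0 h a b D - kap * h)
           (bump_before_x1 : bump_center x0 h a b D + kap * h <= x0 + h).

Lemma cpiece_left :
  cpiece x0 y0 p0 h a b D kap x0 = y0 /\ cpiece' x0 p0 h a b D kap x0 = p0 /\
  cpiece'' x0 h a b D kap x0 = D.
Proof.
  unfold cpiece, cpiece', cpiece''.
  rewrite !tent_left by nra; repeat split; field.
Qed.

Lemma cpiece_right :
  cpiece x0 y0 p0 h a b D kap (x0 + h) = y0 + (p0 + a) * h /\
  cpiece' x0 p0 h a b D kap (x0 + h) = p0 + a + b /\
  cpiece'' x0 h a b D kap (x0 + h) = D.
Proof.
  destruct (tent_right (bump_center x0 h a b D) (kap * h) (x0 + h)) as [E1 [E2 E3]]; [nra|lra|].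
  unfold cpiece, cpiece', cpiece''; rewrite E1, E2, E3.
  unfold bump_height, bump_center; unfold excess in *.
  repeat split; field; lra.
Qed.

Lemma cpiece''_bounds z :
  D <= cpiece'' x0 h a b D kap z <= D + excess h a b D / (kap * h).
Proof.
  unfold cpiece'', bump_height.
  pose proof (tent_1_bounds (bump_center x0 h a b D) (kap * h) z ltac:(nra)) as [B1 B2].
  assert (0 < kap * h) by nra.
  assert (0 < excess h a b D / (kap * h) ^ 2) by (apply Rdiv_lt_0_compat; nra).
  replace (excess h a b D / (kap * h)) with (excess h a b D / (kap * h) ^ 2 * (kap * h))
    by (field; lra).
  split; nra.
Qed.

End CubicPiece.

Lemma slope_r_swap h a b : slope_r h a b = slope_l h b a.
Proof. unfold slope_r, slope_l; rewrite (Rplus_comm b a); reflexivity. Qed.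

Lemma le_slope_l_scaled r h a b D : 0 < h -> 0 < a -> 0 < b ->
  D <= r * slope_l h a b -> D * h * b <= r * (a * (a + b)).
Proof.
  intros Hh Ha Hb HD; unfold slope_l in HD.
  apply Rmult_le_compat_r with (r := b * h) in HD; [|nra].
  replace (r * (a * (a + b) / (b * h)) * (b * h)) with (r * (a * (a + b))) in HD by (field; lra).
  nra.
Qed.

(* With d = D h and A = excess = a + b - d, the hat's centre c satisfies
   x0 + h - c = h (a - d/2) / A and c - x0 = h (b - d/2) / A, so the hat of
   half-width kap h fits in [x0, x0 + h] as soon as kap A <= a - d/2, b - d/2. *)
Lemma share_lower_bound C r a b d :
  1 <= C -> 0 < r < 1 -> 0 < a -> 0 < b -> 0 <= d -> b <= C * a ->
  d * b <= r * (a * (a + b)) -> d * a <= r * (b * (a + b)) ->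
  (1 - r) / (C + 1) * (a + b) <= a - d / 2.
Proof.
  intros HC Hr Ha Hb Hd Hba H1 H2.
  unfold Rdiv; apply Rmult_le_reg_l with (C + 1); [lra|].
  replace ((C + 1) * ((1 - r) * / (C + 1) * (a + b))) with ((1 - r) * (a + b)) by (field; lra).
  destruct (Rle_lt_dec a b).
  - assert (d <= 2 * r * a).
    { apply Rmult_le_reg_r with b; auto.
      assert (0 <= r * a * (b - a)) by (apply Rmult_le_pos; [apply Rmult_le_pos|]; lra).
      nra. }
    nra.
  - assert (d <= r * (a + b)).
    { apply Rmult_le_reg_r with a; auto.
      assert (0 <= r * (a + b) * (a - b)) by (apply Rmult_le_pos; [apply Rmult_le_pos|]; lra).
      nra. }
    assert (0 <= (C - 1) * (a - d / 2)) by (apply Rmult_le_pos; nra).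
    nra.
Qed.

Lemma bump_fits C r x0 h a b D :
  1 <= C -> 0 < r < 1 -> 0 < h -> 0 < a -> 0 < b -> b <= C * a -> a <= C * b -> 0 <= D ->
  D <= r * slope_l h a b -> D <= r * slope_r h a b ->
  let kap := (1 - r) / (C + 1) in
  0 < excess h a b D /\ x0 <= bump_center x0 h a b D - kap * h /\
  bump_center x0 h a b D + kap * h <= x0 + h.
Proof.
  intros HC Hr Hh Ha Hb Hba Hab HD Hl Hr' kap.
  rewrite slope_r_swap in Hr'.
  pose proof (le_slope_l_scaled r h a b D Hh Ha Hb Hl) as Hdb.
  pose proof (le_slope_l_scaled r h b a D Hh Hb Ha Hr') as Hda.
  rewrite Rplus_comm in Hda.
  set (d := D * h) in *.
  assert (Hd : 0 <= d) by (unfold d; nra).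
  assert (Hkap : 0 < kap) by (apply Rdiv_lt_0_compat; lra).
  assert (Hka : kap * (a + b) <= a - d / 2) by (apply share_lower_bound; auto).
  assert (Hkb : kap * (a + b) <= b - d / 2).
  { rewrite Rplus_comm; apply share_lower_bound; rewrite ?(Rplus_comm b a); auto. }
  assert (HA' : excess h a b D = a + b - d) by (unfold excess, d; ring).
  assert (HA : 0 < excess h a b D) by nra.
  assert (HkA : kap * excess h a b D <= kap * (a + b)) by (rewrite HA'; nra).
  assert (Hcenter : bump_center x0 h a b D = x0 + h - h * (a - d / 2) / excess h a b D)
    by (unfold bump_center, d; field; lra).
  rewrite Hcenter; split; [exact HA|split].
  - apply Rmult_le_reg_r with (excess h a b D); [exact HA|].
    replace ((x0 + h - h * (a - d / 2) / excess h a b D - kap * h) * excess h a b D)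
      with (x0 * excess h a b D + h * (excess h a b D - (a - d / 2) - kap * excess h a b D))
      by (field; lra).
    assert (0 <= h * (excess h a b D - (a - d / 2) - kap * excess h a b D))
      by (apply Rmult_le_pos; lra).
    lra.
  - apply Rmult_le_reg_r with (excess h a b D); [exact HA|].
    replace ((x0 + h - h * (a - d / 2) / excess h a b D + kap * h) * excess h a b D)
      with ((x0 + h) * excess h a b D - h * ((a - d / 2) - kap * excess h a b D))
      by (field; lra).
    assert (0 <= h * ((a - d / 2) - kap * excess h a b D)) by (apply Rmult_le_pos; lra).
    lra.
Qed.
(** * The splines through the data *)

Lemma PI_lt_4 : PI < 4.
Proof.
  pose proof (PI_ineq 1) as [_ H]; simpl in H; unfold tg_alt, PI_tg in H; simpl in H; lra.
Qed.

Lemma PI_4_bounds : / 2 < PI / 4 < 1.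
Proof. pose proof PI_lt_4; pose proof PI2_1; lra. Qed.

Lemma minl_le s k j : (j <= k)%nat -> minl s k <= s j.
Proof.
  induction k as [|k IH]; intros Hj; simpl.
  - replace j with 0%nat by lia; lra.
  - destruct (Nat.eq_dec j (S k)) as [->|Hne]; [apply Rmin_r|].
    eapply Rle_trans; [apply Rmin_l | apply IH; lia].
Qed.

Lemma minl_glb s k m : (forall j, (j <= k)%nat -> m <= s j) -> m <= minl s k.
Proof.
  induction k as [|k IH]; intros H; simpl; [apply H; lia|].
  apply Rmin_glb; [apply IH; intros; apply H; lia | apply H; lia].
Qed.

Definition bump_ratio (C : R) : R := (1 - PI / 4) / (C + 1).

Definition spline_bound (C : R) : R := 2 * (C * C) + C / bump_ratio C.

Lemma spline_bound_ge C : 1 <= C -> 2 * (C * C) <= spline_bound C.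
Proof.
  intros HC; unfold spline_bound, bump_ratio; pose proof PI_4_bounds.
  assert (0 < C / ((1 - PI / 4) / (C + 1))) by (repeat apply Rdiv_lt_0_compat; lra); lra.
Qed.

Section Data.
Variables (C : R) (n : nat) (x y p : nat -> R).
Hypothesis C_ge_1 : 1 <= C.
Hypothesis n_ge_2 : (2 <= n)%nat.
Hypothesis data_incr : forall i : nat, (i + 1 < n)%nat ->
  x i < x (i + 1)%nat /\ y i < y (i + 1)%nat /\ p i < p (i + 1)%nat.
Hypothesis data_cond : forall i : nat, (i + 1 < n)%nat ->
  / C * (x (i + 1)%nat - x i) <= p (i + 1)%nat - p i /\
  p (i + 1)%nat - p i <= C * (x (i + 1)%nat - x i) /\
  / C * (p (i + 1)%nat - (y (i + 1)%nat - y i) / (x (i + 1)%nat - x i))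
    <= (y (i + 1)%nat - y i) / (x (i + 1)%nat - x i) - p i /\
  (y (i + 1)%nat - y i) / (x (i + 1)%nat - x i) - p i
    <= C * (p (i + 1)%nat - (y (i + 1)%nat - y i) / (x (i + 1)%nat - x i)).

Definition width (i : nat) : R := x (i + 1)%nat - x i.
Definition secant (i : nat) : R := (y (i + 1)%nat - y i) / width i.
Definition gap_l (i : nat) : R := secant i - p i.
Definition gap_r (i : nat) : R := p (i + 1)%nat - secant i.

Lemma gaps_bounds i : (i + 1 < n)%nat ->
  0 < width i /\ 0 < gap_l i /\ 0 < gap_r i /\
  / C * width i <= gap_l i + gap_r i <= C * width i /\
  / C * gap_r i <= gap_l i <= C * gap_r i /\ gap_r i <= C * gap_l i.
Proof.
  intros Hi; destruct (data_incr i Hi) as [Hx _]; destruct (data_cond i Hi) as [H1 [H2 [H3 H4]]].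
  assert (Hsum : gap_l i + gap_r i = p (i + 1)%nat - p i) by (unfold gap_l, gap_r; ring).
  fold (width i) (secant i) (gap_l i) (gap_r i) in *.
  assert (HiC : 0 < / C) by (apply Rinv_0_lt_compat; lra).
  assert (Hw : 0 < width i) by (unfold width; lra).
  assert (Hb : 0 < gap_r i) by nra.
  assert (Hba : gap_r i <= C * gap_l i).
  { apply Rmult_le_reg_l with (/ C); auto.
    rewrite <- Rmult_assoc, Rinv_l, Rmult_1_l by lra; exact H3. }
  repeat split; nra.
Qed.

Lemma node_identities i : (i + 1 < n)%nat ->
  x (i + 1)%nat = x i + width i /\ y (i + 1)%nat = y i + (p i + gap_l i) * width i /\
  p (i + 1)%nat = p i + gap_l i + gap_r i.
Proof.
  intros Hi; destruct (gaps_bounds i Hi) as [Hw _].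
  unfold gap_l, gap_r, secant; unfold width in *; repeat split; field; lra.
Qed.

Definition spline (F : nat -> R -> R) : R -> R := glue x F (n - 2) 0.

Let last_node_index : (0 + (n - 2) + 1 = n - 1)%nat.
Proof. lia. Qed.

Lemma nodes_increasing_data : nodes_increasing x (0 + (n - 2) + 1).
Proof. rewrite last_node_index; intros j Hj; apply data_incr; lia. Qed.

Lemma spline_on_piece F v j z : interpolates x F v (n - 1) -> (j + 1 < n)%nat ->
  x j <= z <= x (j + 1)%nat -> spline F z = F j z.
Proof.
  intros HF Hj Hz; apply (glue_on_piece x F v); auto;
    [apply nodes_increasing_data | rewrite last_node_index; auto | lia].
Qed.

Lemma spline_interpolates F v l : interpolates x F v (n - 1) -> (l < n)%nat -> spline F (x l) = v l.
Proof.
  intros HF Hl; apply (glue_interpolates x F v);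
    [apply nodes_increasing_data | rewrite last_node_index; auto | lia].
Qed.

Lemma derivable_pt_lim_spline F F' v v' :
  interpolates x F v (n - 1) -> interpolates x F' v' (n - 1) ->
  (forall j z, (j + 1 < n)%nat -> derivable_pt_lim (F j) z (F' j z)) ->
  forall z, derivable_pt_lim (spline F) z (spline F' z).
Proof.
  intros HF HF' HD; apply (derivable_pt_lim_glue x F F' v v');
    [apply nodes_increasing_data | rewrite last_node_index; auto | rewrite last_node_index; auto |].
  intros j z Hj; apply HD; lia.
Qed.

Lemma continuity_pt_spline F v :
  interpolates x F v (n - 1) -> (forall j z, (j + 1 < n)%nat -> continuity_pt (F j) z) ->
  forall z, continuity_pt (spline F) z.
Proof.
  intros HF HC; apply (continuity_pt_glue x F v);
    [apply nodes_increasing_data | rewrite last_node_index; auto |].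
  intros j z Hj; apply HC; lia.
Qed.

Lemma spline_increasing F v :
  interpolates x F v (n - 1) -> (forall j u w, (j + 1 < n)%nat -> u < w -> F j u < F j w) ->
  forall u w, u < w -> spline F u < spline F w.
Proof.
  intros HF HI; apply (glue_increasing x F v);
    [apply nodes_increasing_data | rewrite last_node_index; auto |].
  intros j u w Hj; apply HI; lia.
Qed.

Definition fpiece (i : nat) : R -> R := qpiece (x i) (y i) (p i) (width i) (gap_l i) (gap_r i).
Definition fpiece' (i : nat) : R -> R := qpiece' (x i) (p i) (width i) (gap_l i) (gap_r i).

Lemma fpieces_interpolate : interpolates x fpiece y (n - 1) /\ interpolates x fpiece' p (n - 1).
Proof.
  split; intros i Hi; destruct (gaps_bounds i ltac:(lia)) as [Hw [Ha [Hb _]]];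
    destruct (node_identities i ltac:(lia)) as [Ex [Ey Ep]];
    destruct (qpiece_left (x i) (y i) (p i) _ _ _ Hw Ha Hb) as [L L'];
    destruct (qpiece_right (x i) (y i) (p i) _ _ _ Hw Ha Hb) as [R R'];
    unfold fpiece, fpiece'; rewrite Ex; auto.
  - rewrite Ey; auto.
  - rewrite Ep; auto.
Qed.

Lemma derivable_pt_lim_f z : derivable_pt_lim (spline fpiece) z (spline fpiece' z).
Proof.
  destruct fpieces_interpolate as [HF HF'].
  apply (derivable_pt_lim_spline _ _ y p HF HF'); intros; apply derivable_pt_lim_qpiece.
Qed.

Lemma f_strictly_convex : strictly_convex_on (x 0%nat) (x (n - 1)%nat) (spline fpiece).
Proof.
  apply (strictly_convex_of_deriv_increasing _ _ _ (spline fpiece'));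
    [intros; apply derivable_pt_lim_f|intros u w _ Huw _].
  apply (spline_increasing _ p); [apply fpieces_interpolate| |exact Huw].
  intros j u' w' Hj; destruct (gaps_bounds j Hj) as [Hw [Ha [Hb _]]].
  apply qpiece'_increasing; auto.
Qed.

Lemma f_C1 : C1_on (x 0%nat) (x (n - 1)%nat) (spline fpiece) (spline fpiece').
Proof.
  split.
  - intros; apply has_deriv_within_of_derivable_pt_lim, derivable_pt_lim_f.
  - apply cont_on_of_continuity_pt, (continuity_pt_spline _ p); [apply fpieces_interpolate|].
    intros; apply continuity_pt_qpiece'.
Qed.

Lemma f_interpolates i : (i < n)%nat -> spline fpiece (x i) = y i /\ spline fpiece' (x i) = p i.
Proof.
  intros Hi; destruct fpieces_interpolate as [HF HF'].
  split; [apply (spline_interpolates _ y) | apply (spline_interpolates _ p)]; auto.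
Qed.

Definition piece_kink (i : nat) : R := kink (width i) (gap_l i) (gap_r i).

Definition knot (j : nat) : R :=
  if Nat.even j then x (Nat.div2 j) else x (Nat.div2 j) + piece_kink (Nat.div2 j).

Definition slope (j : nat) : R :=
  if Nat.even j then slope_l (width (Nat.div2 j)) (gap_l (Nat.div2 j)) (gap_r (Nat.div2 j))
  else slope_r (width (Nat.div2 j)) (gap_l (Nat.div2 j)) (gap_r (Nat.div2 j)).

Lemma knot_even k : knot (2 * k) = x k.
Proof. unfold knot; rewrite Nat.even_even, Nat.div2_double; reflexivity. Qed.

Lemma knot_odd k : knot (2 * k + 1) = x k + piece_kink k.
Proof. unfold knot; rewrite Nat.even_odd, Nat.div2_odd'; reflexivity. Qed.

Lemma slope_even k : slope (2 * k) = slope_l (width k) (gap_l k) (gap_r k).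
Proof. unfold slope; rewrite Nat.even_even, Nat.div2_double; reflexivity. Qed.

Lemma slope_odd k : slope (2 * k + 1) = slope_r (width k) (gap_l k) (gap_r k).
Proof. unfold slope; rewrite Nat.even_odd, Nat.div2_odd'; reflexivity. Qed.

Lemma knot_odd_next k : knot (2 * k + 1 + 1) = x (k + 1)%nat.
Proof. replace (2 * k + 1 + 1)%nat with (2 * (k + 1))%nat by lia; apply knot_even. Qed.

Lemma knot_piece j : (j < 2 * (n - 1))%nat ->
  exists k, (k + 1 < n)%nat /\ (j = 2 * k \/ j = 2 * k + 1)%nat.
Proof.
  intros Hj; destruct (Nat.Even_or_Odd j) as [[k Hk]|[k Hk]]; exists k; split; lia.
Qed.

Lemma piece_kink_bounds k : (k + 1 < n)%nat -> 0 < piece_kink k < width k.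
Proof. intros Hk; destruct (gaps_bounds k Hk) as [Hw [Ha [Hb _]]]; apply kink_bounds; auto. Qed.

Lemma knots_increasing j : (j < 2 * (n - 1))%nat -> knot j < knot (j + 1).
Proof.
  intros Hj; destruct (knot_piece j Hj) as [k [Hk [-> | ->]]];
    pose proof (piece_kink_bounds k Hk).
  - rewrite knot_even, knot_odd; lra.
  - rewrite knot_odd, knot_odd_next, (proj1 (node_identities k Hk)); lra.
Qed.

Lemma slopes_bounds_data j : (j < 2 * (n - 1))%nat -> / (C * C) <= slope j <= C * C.
Proof.
  intros Hj; destruct (knot_piece j Hj) as [k [Hk Hjk]];
    destruct (gaps_bounds k Hk) as [Hw [Ha [Hb [Hs [Hr _]]]]];
    destruct (slopes_bounds _ _ _ Hw Ha Hb C C_ge_1 Hs Hr).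
  destruct Hjk as [-> | ->]; [rewrite slope_even | rewrite slope_odd]; auto.
Qed.

Lemma f'_linear_on_knots j : (j < 2 * (n - 1))%nat ->
  forall z, knot j <= z <= knot (j + 1) ->
  spline fpiece' z = spline fpiece' (knot j) + slope j * (z - knot j).
Proof.
  intros Hj z Hz; destruct (knot_piece j Hj) as [k [Hk Hjk]].
  pose proof (piece_kink_bounds k Hk).
  destruct (node_identities k Hk) as [Ex _].
  destruct fpieces_interpolate as [_ HF'].
  assert (Hon : forall u, knot j <= u <= knot (j + 1) -> spline fpiece' u = fpiece' k u).
  { intros u Hu; apply (spline_on_piece _ p); auto.
    destruct Hjk as [-> | ->];
      [rewrite knot_even, knot_odd in Hu | rewrite knot_odd, knot_odd_next in Hu]; lra. }
  rewrite !Hon by lra; unfold fpiece'.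
  destruct (gaps_bounds k Hk) as [Hw [Ha [Hb _]]].
  destruct Hjk as [-> | ->].
  - rewrite knot_even, knot_odd in *; rewrite slope_even.
    apply qpiece'_left_linear; auto; unfold piece_kink in Hz; lra.
  - rewrite knot_odd, knot_odd_next in *; rewrite slope_odd.
    apply qpiece'_right_linear; unfold piece_kink in Hz; lra.
Qed.

Definition D : R := PI / 4 * minl slope (2 * (n - 1) - 1).

Lemma D_le_slopes k : (k + 1 < n)%nat ->
  D <= PI / 4 * slope_l (width k) (gap_l k) (gap_r k) /\
  D <= PI / 4 * slope_r (width k) (gap_l k) (gap_r k).
Proof.
  intros Hk; pose proof PI_4_bounds; unfold D; rewrite <- slope_even, <- slope_odd.
  split; apply Rmult_le_compat_l; try lra; apply minl_le; lia.
Qed.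

Lemma D_lower : PI / 4 / (C * C) <= D.
Proof.
  pose proof PI_4_bounds; unfold D, Rdiv; apply Rmult_le_compat_l; [lra|].
  apply minl_glb; intros j Hj; apply slopes_bounds_data; lia.
Qed.

Lemma D_pos : 0 < D.
Proof.
  pose proof PI_4_bounds; eapply Rlt_le_trans; [|apply D_lower].
  apply Rdiv_lt_0_compat; nra.
Qed.

Lemma bumps_fit k : (k + 1 < n)%nat ->
  0 < excess (width k) (gap_l k) (gap_r k) D /\
  x k <= bump_center (x k) (width k) (gap_l k) (gap_r k) D - bump_ratio C * width k /\
  bump_center (x k) (width k) (gap_l k) (gap_r k) D + bump_ratio C * width k <= x k + width k.
Proof.
  intros Hk; destruct (gaps_bounds k Hk) as [Hw [Ha [Hb [_ [[_ Hab] Hba]]]]].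
  destruct (D_le_slopes k Hk); pose proof PI_4_bounds; pose proof D_pos.
  apply bump_fits; auto; lra.
Qed.

Definition gpiece (i : nat) : R -> R :=
  cpiece (x i) (y i) (p i) (width i) (gap_l i) (gap_r i) D (bump_ratio C).
Definition gpiece' (i : nat) : R -> R :=
  cpiece' (x i) (p i) (width i) (gap_l i) (gap_r i) D (bump_ratio C).
Definition gpiece'' (i : nat) : R -> R :=
  cpiece'' (x i) (width i) (gap_l i) (gap_r i) D (bump_ratio C).

Lemma bump_ratio_pos : 0 < bump_ratio C.
Proof. pose proof PI_4_bounds; apply Rdiv_lt_0_compat; lra. Qed.

Lemma gpieces_interpolate :
  interpolates x gpiece y (n - 1) /\ interpolates x gpiece' p (n - 1) /\
  interpolates x gpiece'' (fun _ => D) (n - 1).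
Proof.
  pose proof bump_ratio_pos.
  split; [|split]; intros i Hi; destruct (gaps_bounds i ltac:(lia)) as [Hw _];
    destruct (bumps_fit i ltac:(lia)) as [HA [Hl Hr]];
    destruct (node_identities i ltac:(lia)) as [Ex [Ey Ep]];
    destruct (cpiece_left (x i) (y i) (p i) (width i) (gap_l i) (gap_r i) D (bump_ratio C))
      as [L [L' L'']]; auto;
    destruct (cpiece_right (x i) (y i) (p i) (width i) (gap_l i) (gap_r i) D (bump_ratio C))
      as [R [R' R'']]; auto;
    unfold gpiece, gpiece', gpiece''; rewrite Ex; auto.
  - rewrite Ey; auto.
  - rewrite Ep; auto.
Qed.

Lemma derivable_pt_lim_g z : derivable_pt_lim (spline gpiece) z (spline gpiece' z).
Proof.
  destruct gpieces_interpolate as [HG [HG' _]].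
  apply (derivable_pt_lim_spline _ _ y p HG HG'); intros; apply derivable_pt_lim_cpiece.
Qed.

Lemma derivable_pt_lim_g' z : derivable_pt_lim (spline gpiece') z (spline gpiece'' z).
Proof.
  destruct gpieces_interpolate as [_ [HG' HG'']].
  apply (derivable_pt_lim_spline _ _ p _ HG' HG''); intros; apply derivable_pt_lim_cpiece'.
Qed.

Lemma g''_bounds z : D <= spline gpiece'' z <= C * C + C / bump_ratio C.
Proof.
  destruct (glue_piece x gpiece'' (n - 2) 0 z) as [j [Hj E]]; unfold spline; rewrite E.
  destruct (gaps_bounds j ltac:(lia)) as [Hw [Ha [Hb [Hs [Hr _]]]]].
  destruct (slopes_bounds _ _ _ Hw Ha Hb C C_ge_1 Hs Hr) as [[_ Hsl] _].
  destruct (bumps_fit j ltac:(lia)) as [HA _].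
  destruct (D_le_slopes j ltac:(lia)) as [Hl _].
  pose proof bump_ratio_pos; pose proof PI_4_bounds; pose proof D_pos.
  destruct (cpiece''_bounds (x j) (width j) (gap_l j) (gap_r j) D (bump_ratio C) Hw H HA z).
  assert (excess (width j) (gap_l j) (gap_r j) D / (bump_ratio C * width j) <= C / bump_ratio C).
  { replace (C / bump_ratio C) with (C * width j / (bump_ratio C * width j)) by (field; lra).
    unfold Rdiv; apply Rmult_le_compat_r; [left; apply Rinv_0_lt_compat; nra|].
    unfold excess; nra. }
  unfold gpiece''; split; nra.
Qed.

Lemma g_convex : convex_on (x 0%nat) (x (n - 1)%nat) (spline gpiece).
Proof.
  apply convex_of_strictly_convex, (strictly_convex_of_deriv_increasing _ _ _ (spline gpiece'));
    [intros; apply derivable_pt_lim_g|intros u w _ Huw _].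
  apply (increasing_of_deriv_pos _ (spline gpiece'')); [apply derivable_pt_lim_g'| |exact Huw].
  intros z; pose proof D_pos; pose proof (g''_bounds z); lra.
Qed.

Lemma g_C2 : C2_on (x 0%nat) (x (n - 1)%nat) (spline gpiece) (spline gpiece') (spline gpiece'').
Proof.
  split; [|split].
  - intros; apply has_deriv_within_of_derivable_pt_lim, derivable_pt_lim_g.
  - intros; apply has_deriv_within_of_derivable_pt_lim, derivable_pt_lim_g'.
  - apply cont_on_of_continuity_pt, (continuity_pt_spline _ (fun _ => D));
      [apply gpieces_interpolate|].
    intros; apply continuity_pt_cpiece''.
Qed.

Lemma g_interpolates i : (i < n)%nat ->
  spline gpiece (x i) = y i /\ spline gpiece' (x i) = p i /\ spline gpiece'' (x i) = D.
Proof.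
  intros Hi; destruct gpieces_interpolate as [HG [HG' HG'']].
  split; [|split]; [apply (spline_interpolates _ y) | apply (spline_interpolates _ p)
                   | apply (spline_interpolates _ (fun _ => D))]; auto.
Qed.

Lemma slopes_within_bound j : (j < 2 * (n - 1))%nat ->
  / spline_bound C <= slope j <= spline_bound C.
Proof.
  intros Hj; pose proof (spline_bound_ge C C_ge_1); pose proof (slopes_bounds_data j Hj).
  assert (/ spline_bound C <= / (C * C)) by (apply Rinv_le_contravar; nra).
  assert (0 <= C * C) by nra.
  lra.
Qed.

Lemma g''_within_bound z : / spline_bound C <= spline gpiece'' z <= spline_bound C.
Proof.
  pose proof (spline_bound_ge C C_ge_1); pose proof (g''_bounds z); pose proof D_lower.
  pose proof PI_4_bounds.
  assert (/ spline_bound C <= / (2 * (C * C))) by (apply Rinv_le_contravar; nra).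
  assert (/ (2 * (C * C)) <= PI / 4 / (C * C)).
  { rewrite Rinv_mult; unfold Rdiv; apply Rmult_le_compat_r; [|lra].
    left; apply Rinv_0_lt_compat; nra. }
  assert (0 <= C * C) by nra.
  unfold spline_bound in *; lra.
Qed.

End Data.

Theorem theorem5 :
  forall C : R, 1 <= C ->
  exists K : R, 1 <= K /\
  forall (n : nat) (x y p : nat -> R),
    (2 <= n)%nat ->
    (forall i : nat, (i + 1 < n)%nat ->
       x i < x (i + 1)%nat /\ y i < y (i + 1)%nat /\ p i < p (i + 1)%nat) ->
    (forall i : nat, (i + 1 < n)%nat ->
       / C * (x (i + 1)%nat - x i) <= p (i + 1)%nat - p i /\
       p (i + 1)%nat - p i <= C * (x (i + 1)%nat - x i) /\
       / C * (p (i + 1)%nat - (y (i + 1)%nat - y i) / (x (i + 1)%nat - x i))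
         <= (y (i + 1)%nat - y i) / (x (i + 1)%nat - x i) - p i /\
       (y (i + 1)%nat - y i) / (x (i + 1)%nat - x i) - p i
         <= C * (p (i + 1)%nat - (y (i + 1)%nat - y i) / (x (i + 1)%nat - x i))) ->
    exists (f f1 : R -> R) (m : nat) (t s : nat -> R),
      (* (a) *)
      strictly_convex_on (x 0%nat) (x (n - 1)%nat) f /\
      C1_on (x 0%nat) (x (n - 1)%nat) f f1 /\
      (forall i : nat, (i < n)%nat -> f (x i) = y i /\ f1 (x i) = p i) /\
      (* f1 = f' is piecewise linear, pieces [t j, t (j+1)] with slope s j *)
      (1 <= m)%nat /\
      t 0%nat = x 0%nat /\ t m = x (n - 1)%nat /\
      (forall j : nat, (j < m)%nat -> t j < t (j + 1)%nat) /\
      (forall j : nat, (j < m)%nat ->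
         (forall z : R, t j <= z <= t (j + 1)%nat -> f1 z = f1 (t j) + s j * (z - t j)) /\
         / K <= s j <= K) /\
      (* (b) with D = pi/4 * (infimum of the slopes s 0 .. s (m-1)) *)
      (exists g g1 g2 : R -> R,
         convex_on (x 0%nat) (x (n - 1)%nat) g /\
         C2_on (x 0%nat) (x (n - 1)%nat) g g1 g2 /\
         (forall i : nat, (i < n)%nat ->
            g (x i) = y i /\ g1 (x i) = p i /\
            g2 (x i) = PI / 4 * minl s (m - 1)%nat) /\
         (forall z : R, x 0%nat < z < x (n - 1)%nat -> / K <= g2 z <= K)).
Proof.
  intros C HC; exists (spline_bound C).
  split; [pose proof (spline_bound_ge C HC); nra|].
  intros n x y p Hn Hmono Hcond.
  pose proof (f_interpolates C n x y p HC Hn Hmono Hcond) as Hf.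
  pose proof (g_interpolates C n x y p HC Hn Hmono Hcond) as Hg.
  exists (spline n x (fpiece x y p)), (spline n x (fpiece' x y p)), (2 * (n - 1))%nat,
         (knot x y p), (slope x y p).
  split; [apply (f_strictly_convex C); auto|].
  split; [apply (f_C1 C); auto|].
  split; [exact Hf|].
  split; [lia|].
  split; [reflexivity|].
  split; [apply knot_even|].
  split; [apply (knots_increasing C); auto|].
  split; [intros j Hj; split;
          [apply (f'_linear_on_knots C n) | apply (slopes_within_bound C n)]; auto|].
  exists (spline n x (gpiece C n x y p)), (spline n x (gpiece' C n x y p)),
         (spline n x (gpiece'' C n x y p)).
  split; [apply g_convex; auto|].
  split; [apply g_C2; auto|].
  split; [exact Hg|].
  intros z _; apply (g''_within_bound C n x y p); auto.
Qed.
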